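(* Let $f_1,\dots,f_P:\mathbb{R}^n\to\mathbb{R}$ be continuously differentiable with Lipschitz continuous gradients, and let $f=\sum_{i=1}^P f_i$. Let $\{\zeta^k\}\subset\mathbb{R}_+$ be a sequence of positive step sizes with $\lim_{k\to\infty}\zeta^k=0$, and let $\{w^k\}\subset\mathbb{R}^n$ be a bounded sequence. For every $k$, let $(\widetilde w^k,d^k,\tilde f^k)=\texttt{Inner\_Cycle}(w^k,\zeta^k)$, with intermediate points $\widetilde w^k_0,\dots,\widetilde w^k_P$. Then for any limit point $\bar w$ of $\{w^k\}$ there exists an infinite index set $K$ such that \[ \lim_{k\to\infty,k\in K} w^k=\bar w,\qquad \lim_{k\to\infty,k\in K}\zeta^k=0,\qquad \lim_{k\to\infty,k\in K}\widetilde w^k_i=\bar w\ \text{ for all } i=1,\dots,P, \] \[ \lim_{k\to\infty,k\in K} d^k=-\nabla f(\bar w),\qquad \lim_{k\to\infty,k\in K}\tilde f^k=f(\bar w). \]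
   Context: The procedure $\texttt{Inner\_Cycle}(w,\zeta)$ (one epoch of the incremental gradient method) is defined as follows: set $\widetilde w_0=w$; for $i=1,\dots,P$ set $\tilde f_i=f_i(\widetilde w_{i-1})$, $\tilde d_i=-\nabla f_i(\widetilde w_{i-1})$, $\widetilde w_i=\widetilde w_{i-1}+\zeta\tilde d_i$. It outputs $\widetilde w=\widetilde w_P$, the direction $d=\sum_{i=1}^P\tilde d_i$, and the function estimate $\tilde f=\sum_{i=1}^P\tilde f_i=\sum_{i=1}^P f_i(\widetilde w_{i-1})$. When applied to $(w^k,\zeta^k)$ the intermediate points are denoted $\widetilde w^k_i$ and the outputs $\widetilde w^k,d^k,\tilde f^k$. *)

(* R^n is modelled as row vectors 'rV[R]_n. *)
From HB Require Import structures.
From mathcomp Require Import all_boot all_order all_algebra.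
From mathcomp Require Import all_classical all_reals all_analysis.
Set Implicit Arguments. Unset Strict Implicit. Unset Printing Implicit Defensive.
Import Order.TTheory GRing.Theory Num.Theory.
Import numFieldNormedType.Exports.
Local Open Scope ring_scope.

Section Defs.
Variables (R : realType) (n : nat).

Definition grad (f : 'rV[R]_n -> R) (x : 'rV[R]_n) : 'rV[R]_n :=
  \row_(j < n) ('D_(delta_mx 0 j) f x).

(* Inner_Cycle. The component functions f_1,...,f_P are represented by
   fs 0, ..., fs (P-1) (0-based indexing). *)
Fixpoint inner_pt (fs : nat -> 'rV[R]_n -> R) (zeta : R) (w : 'rV[R]_n)
    (i : nat) : 'rV[R]_n :=
  match i with
  | 0 => w
  | i'.+1 => let v := inner_pt fs zeta w i' in v + zeta *: (- grad (fs i') v)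
  end.

Definition inner_w (P : nat) (fs : nat -> 'rV[R]_n -> R) (zeta : R) (w : 'rV[R]_n) := inner_pt fs zeta w P.
Definition inner_d (P : nat) (fs : nat -> 'rV[R]_n -> R) (zeta : R) (w : 'rV[R]_n) :=
  \sum_(i < P) (- grad (fs (nat_of_ord i)) (inner_pt fs zeta w i)).
Definition inner_f (P : nat) (fs : nat -> 'rV[R]_n -> R) (zeta : R) (w : 'rV[R]_n) :=
  \sum_(i < P) fs (nat_of_ord i) (inner_pt fs zeta w i).

Definition lipschitz_map (g : 'rV[R]_n -> 'rV[R]_n) :=
  exists L : R, forall x y, `|g x - g y| <= L * `|x - y|.

End Defs.

Section Seq.
Variables (R : realType) (V : normedModType R).

Definition seq_limit_point (u : nat -> V) (lbar : V) :=
  forall e : R, 0 < e -> forall N : nat, exists k, (N <= k)%N /\ `|u k - lbar| < e.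

Definition infinite_index (K : nat -> bool) := forall m : nat, exists k, (m <= k)%N /\ K k.

Definition lim_along (K : nat -> bool) (u : nat -> V) (l : V) :=
  forall e : R, 0 < e -> exists N : nat, forall k, (N <= k)%N -> K k -> `|u k - l| < e.

End Seq.

(* Choose a subsequence g along which w tends to wbar and take K the
   range of g.  Since the step sizes tend to 0, each inner step
   zeta * grad f_i vanishes in the limit, so by induction every intermediate
   point of the cycle tends to wbar; continuity of the f_i and of their
   gradients then yields the limits of d and of the function estimate, and
   grad f = sum_i grad f_i. *)
From HB Require Import structures.
From mathcomp Require Import all_boot all_order all_algebra.
From mathcomp Require Import all_classical all_reals all_analysis.
Import Order.TTheory GRing.Theory Num.Theory.
Import numFieldNormedType.Exports.
Local Open Scope ring_scope.
Local Open Scope classical_set_scope.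

Section Subsequences.
Context {R : realType} {V : normedModType R}.

Lemma increasing_seq_ge {g : nat -> nat} : increasing_seq g -> forall m, (m <= g m)%N.
Proof.
move=> /increasing_seqP g_lt; elim=> // m le_m_gm.
exact: leq_ltn_trans le_m_gm (g_lt m).
Qed.

Lemma cvg_increasing_subseq {g : nat -> nat} {u : nat -> V} {l : V} :
  increasing_seq g -> u @ \oo --> l -> u \o g @ \oo --> l.
Proof.
move=> g_incr; apply: cvg_comp; apply/cvgnyPge => N.
by exists N => // m /= /leq_trans; apply; apply: increasing_seq_ge.
Qed.

Lemma limit_point_subseq (u : nat -> V) (l : V) :
  seq_limit_point u l -> exists2 g : nat -> nat, increasing_seq g & u \o g @ \oo --> l.
Proof.
move=> lp.
have pick m N : {k | (N <= k)%N /\ `|u k - l| < m.+1%:R^-1}.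
  by apply: cid; apply: lp; rewrite invr_gt0 ltr0n.
pose g := fix g m := if m is m'.+1 then sval (pick m (g m').+1) else sval (pick 0 0).
have g_spec m : `|u (g m) - l| < m.+1%:R^-1.
  by case: m => [|m]; [case: (svalP (pick 0 0)) | case: (svalP (pick m.+1 (g m).+1))].
exists g.
  by apply/increasing_seqP => m; case: (svalP (pick m.+1 (g m).+1)).
apply/cvgrPdist_lt => e e0; near=> m; rewrite distrC.
by apply: lt_trans (g_spec m) _; near: m; apply: near_infty_natSinv_lt (PosNum e0).
Unshelve. all: by end_near.
Qed.

Lemma lim_along_range {g : nat -> nat} {u : nat -> V} {l : V} :
  increasing_seq g -> u \o g @ \oo --> l -> lim_along (fun k => `[< range g k >]) u l.
Proof.
move=> g_incr /cvgrPdist_lt ugl e e0; have [N _ ltN] := ugl e e0.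
exists (g N) => k + /asboolP[m _ gm_k]; rewrite -gm_k -leEnat g_incr => le_Nm.
by rewrite distrC; apply: ltN.
Qed.

Lemma infinite_index_range {g : nat -> nat} :
  increasing_seq g -> infinite_index (fun k => `[< range g k >]).
Proof.
move=> g_incr m; exists (g m); split; first exact: increasing_seq_ge.
by apply/asboolP; exists m.
Qed.

End Subsequences.

Section InnerCycle.
Context {R : realType} {n : nat}.

Lemma grad_sum (P : nat) (fs : 'I_P -> 'rV[R]_n -> R) (x : 'rV[R]_n) :
  (forall i, differentiable (fs i) x) ->
  grad (fun y => \sum_(i < P) fs i y) x = \sum_(i < P) grad (fs i) x.
Proof.
move=> dfs; apply/rowP => j; rewrite !mxE summxE.
under [RHS]eq_bigr do rewrite mxE.
rewrite -(fct_sumE _ _ fs); apply: derive_sum => i.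
exact/diff_derivable/dfs.
Qed.

Context {T : Type} {F : set_system T} {FF : Filter F}.
Context {P : nat} {fs : nat -> 'rV[R]_n -> R}.
Context {zeta : T -> R} {w : T -> 'rV[R]_n} {wbar : 'rV[R]_n}.
Hypothesis cont_grad : forall i, (i < P)%N -> continuous (grad (fs i)).
Hypothesis zeta0 : zeta @ F --> 0.
Hypothesis w_wbar : w @ F --> wbar.

Lemma cvg_inner_pt i : (i <= P)%N -> inner_pt fs (zeta t) (w t) i @[t --> F] --> wbar.
Proof.
elim: i => [_ //|i IH lt_iP] /=.
rewrite -[wbar]addr0 -(scale0r (- grad (fs i) wbar)).
apply: cvgD; first exact/IH/ltnW.
apply: cvgZ => //; apply: cvgN; apply: continuous_cvg; first exact: cont_grad.
exact/IH/ltnW.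
Qed.

Lemma cvg_inner_d :
  inner_d P fs (zeta t) (w t) @[t --> F] --> \sum_(i < P) - grad (fs i) wbar.
Proof.
rewrite /inner_d; apply: cvg_big => [|i _]; first exact: add_continuous.
apply: cvgN; apply: continuous_cvg; first exact: cont_grad.
exact/cvg_inner_pt/ltnW.
Qed.

Lemma cvg_inner_f : (forall i, (i < P)%N -> continuous (fs i)) ->
  inner_f P fs (zeta t) (w t) @[t --> F] --> \sum_(i < P) fs i wbar.
Proof.
move=> cont_fs; rewrite /inner_f; apply: cvg_big => [|i _]; first exact: add_continuous.
apply: continuous_cvg; first exact: cont_fs.
exact/cvg_inner_pt/ltnW.
Qed.

End InnerCycle.

Theorem proposition1 (R : realType) (n P : nat) (fs : nat -> 'rV[R]_n -> R)
  (zeta : nat -> R) (w : nat -> 'rV[R]_n) (wbar : 'rV[R]_n) :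
  (forall i, (i < P)%N -> forall x, differentiable (fs i) x) ->
  (forall i, (i < P)%N -> continuous (grad (fs i))) ->
  (forall i, (i < P)%N -> lipschitz_map (grad (fs i))) ->
  (forall k, 0 < zeta k) ->
  (zeta @ \oo --> (0 : R))%classic ->
  (exists M : R, forall k, `|w k| <= M) ->
  seq_limit_point w wbar ->
  let f := fun x => \sum_(i < P) fs i x in
  exists K : nat -> bool,
    infinite_index K /\
    [/\ lim_along K w wbar,
        lim_along K zeta 0,
        (forall i, (1 <= i <= P)%N ->
           lim_along K (fun k => inner_pt fs (zeta k) (w k) i) wbar),
        lim_along K (fun k => inner_d P fs (zeta k) (w k)) (- grad f wbar)
      & lim_along K (fun k => inner_f P fs (zeta k) (w k)) (f wbar)].
Proof.
move=> dfs cont_grad _ _ zeta0 _ /limit_point_subseq[g g_incr w_wbar] f.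
have zeta0_g := cvg_increasing_subseq g_incr zeta0.
exists (fun k => `[< range g k >]); split; first exact: infinite_index_range.
split.
- exact: (lim_along_range g_incr).
- exact: (lim_along_range g_incr).
- move=> i /andP[_ le_iP]; apply: (lim_along_range g_incr).
  exact: cvg_inner_pt cont_grad zeta0_g w_wbar _ le_iP.
- apply: (lim_along_range g_incr); rewrite grad_sum => [|i]; last exact: dfs.
  by rewrite -sumrN; exact: cvg_inner_d cont_grad zeta0_g w_wbar.
- apply: (lim_along_range g_incr); apply: cvg_inner_f cont_grad zeta0_g w_wbar _.
  by move=> i lt_iP x; apply/differentiable_continuous/dfs.
Qed.
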